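(* Let $F$ be a discrete time regulatory network on $[0,1]^d$ satisfying coordinatewise injectivity, let $(V,\mathcal A)$ be its underlying network, let $U\subset V$ be head-independent, and let $W:=V\setminus U$. Then $W$ is essential.
   Context: $V=\{1,\dots,d\}$; $K\in[0,1]^{d\times d}$ with $\sum_iK_{i,j}=1$ for each $j$; $s\in\{-1,0,1\}^{d\times d}$, $T\in[0,1]^{d\times d}$ with $s_{i,j}=0$ iff $K_{i,j}=0$ and $T_{i,j}=0$ iff $K_{i,j}=0$; $a\in[0,1]$; $H(x)=0$ for $x\le0$, $1$ otherwise; $F(x)_j=ax_j+(1-a)\sum_iK_{i,j}H(s_{i,j}(x_i-T_{i,j}))$. Underlying network: $\mathcal A=\{(i,j):K_{i,j}>0\}$. Coordinatewise injectivity: for each $j$, with $\mathcal F_j=\{x\mapsto ax+(1-a)\sum_i\epsilon_iK_{i,j}:\epsilon\in\{0,1\}^d\}$, distinct $f,f'\in\mathcal F_j$ have $f([0,1])\cap f'([0,1])=\emptyset$. Base partition: $\mathcal P_i$ is the set of nonempty level sets of $u\mapsto(H(s_{i,k}(u-T_{i,k})))_{k=1}^d$ on $[0,1]$, $\mathcal P=\{\prod_iI_i:I_i\in\mathcal P_i\}$; $\mathcal P^1=\mathcal P$, $\mathcal P^{t+1}=\{F^{-1}(\mathbf I)\cap\mathbf J\ne\emptyset:\mathbf I\in\mathcal P^t,\mathbf J\in\mathcal P\}$. $\mathcal Q^t=\{F^{t-1}(\mathbf I):\mathbf I\in\mathcal P^t\}$, $\mathcal Q_i^t=\{\Pi_i\mathbf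 J:\mathbf J\in\mathcal Q^t\}$. For $W'\subset V$, a $(W',t)$-specification is $\mathbf S=(S_i)_{i\in W'}$ with $S_i\in\mathcal Q_i^t$; $C(\mathbf S)=\{\mathbf J\in\mathcal Q^t:\Pi_i\mathbf J=S_i\ \forall i\in W'\}$ and $N(\mathbf S)=\#C(\mathbf S)$. $W$ is essential if there is $M\in\mathbb N$ with $N(\mathbf S)\le M$ for all $t\ge1$ and all $(W,t)$-specifications $\mathbf S$. $U$ is head-independent if (1) no arrow with tail in $U$ has head in $U$, and (2) distinct $i,i'\in U$ have $\{j:(i,j)\in\mathcal A\}\cap\{j:(i',j)\in\mathcal A\}=\emptyset$. *)

From HB Require Import structures.
From mathcomp Require Import all_boot all_order all_algebra.
From mathcomp Require Import boolp classical_sets cardinality reals.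
Set Implicit Arguments. Unset Strict Implicit. Unset Printing Implicit Defensive.
Import Order.TTheory GRing.Theory Num.Theory.
Local Open Scope classical_set_scope.
Local Open Scope ring_scope.

Section RegNet.
Variables (R : realType) (d : nat).

(* points of R^d; V = {1..d} is represented by 'I_d *)
Definition pt := 'I_d -> R.

Definition unit_int : set R := [set u : R | 0 <= u <= 1].
Definition cube : set pt := [set x : pt | forall i, unit_int (x i)].

Definition heav (x : R) : R := if x <= 0 then 0 else 1.

Definition regnet_params (a : R) (K : 'I_d -> 'I_d -> R)
    (s : 'I_d -> 'I_d -> int) (T : 'I_d -> 'I_d -> R) : Prop :=
  (forall i j, 0 <= K i j <= 1) /\
  (forall j, \sum_(i < d) K i j = 1) /\
  (forall i j, s i j \in [:: (-1)%R; 0%R; 1%R]) /\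
  (forall i j, s i j = 0 <-> K i j = 0) /\
  (forall i j, 0 <= T i j <= 1) /\
  (forall i j, T i j = 0 <-> K i j = 0) /\
  (0 <= a <= 1).

Variables (a : R) (K : 'I_d -> 'I_d -> R) (s : 'I_d -> 'I_d -> int)
  (T : 'I_d -> 'I_d -> R).

Definition regF (x : pt) : pt :=
  fun j => a * x j + (1 - a) * \sum_(i < d) K i j * heav ((s i j)%:~R * (x i - T i j)).

Definition arrow (i j : 'I_d) : Prop := 0 < K i j.

Definition coord_fun (j : 'I_d) (e : 'I_d -> bool) : R -> R :=
  fun x => a * x + (1 - a) * \sum_(i < d) (e i)%:R * K i j.

Definition coordinatewise_injective : Prop :=
  forall (j : 'I_d) (e e' : 'I_d -> bool),
    coord_fun j e <> coord_fun j e' ->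
    (coord_fun j e @` unit_int) `&` (coord_fun j e' @` unit_int) = set0.

Definition level_map (i : 'I_d) (u : R) : 'I_d -> R :=
  fun k => heav ((s i k)%:~R * (u - T i k)).

Definition base_part_i (i : 'I_d) : set (set R) :=
  [set A | exists2 u, unit_int u &
     A = [set u' | unit_int u' /\ level_map i u' = level_map i u]].

Definition base_part : set (set pt) :=
  [set B | exists I : 'I_d -> set R,
     (forall i, base_part_i i (I i)) /\ B = [set x : pt | forall i, I i (x i)]].

(* Ppart n = P^(n+1) *)
Fixpoint Ppart (n : nat) : set (set pt) :=
  match n with
  | 0 => base_part
  | n'.+1 => [set B | exists I J, [/\ Ppart n' I, base_part J,
                B = (regF @^-1` I) `&` J & B !=set0]]
  end.

(* Qpart n = Q^(n+1) = { F^n(I) : I in P^(n+1) } *)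
Definition Qpart (n : nat) : set (set pt) :=
  [set Jq | exists2 I, Ppart n I & Jq = iter n regF @` I].

Definition proj (i : 'I_d) (J : set pt) : set R := (fun x : pt => x i) @` J.

Definition Qpart_i (n : nat) (i : 'I_d) : set (set R) :=
  [set A | exists2 J, Qpart n J & A = proj i J].

(* a (W', n+1)-specification: S_i in Q_i^(n+1) for i in W' (values off W' irrelevant) *)
Definition is_spec (W' : {set 'I_d}) (n : nat) (S : 'I_d -> set R) : Prop :=
  forall i, i \in W' -> Qpart_i n i (S i).

Definition Cspec (W' : {set 'I_d}) (n : nat) (S : 'I_d -> set R) : set (set pt) :=
  [set J | Qpart n J /\ forall i, i \in W' -> proj i J = S i].

Definition essential (W : {set 'I_d}) : Prop :=
  exists M : nat, forall (n : nat) (S : 'I_d -> set R),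
    is_spec W n S -> (Cspec W n S #<= `I_M)%card.

Definition head_independent (U : {set 'I_d}) : Prop :=
  (forall i j, i \in U -> j \in U -> ~ arrow i j) /\
  (forall i i', i \in U -> i' \in U -> i != i' ->
     forall j, ~ (arrow i j /\ arrow i' j)).

End RegNet.

(** A cell of the partition [P^(n+1)] consists of the points of the cube
    sharing an itinerary, i.e. the pattern of active interactions along the
    first [n+1] iterates.  Two cells of [Q^(n+1)] with the same
    [W]-projections and the same last two activity patterns coincide: if
    [a = 0] both are the single point determined by the pattern at time
    [n-1]; otherwise coordinatewise injectivity lets one run a shared
    [w]-coordinate backwards in time, recovering for [w] in [W] both the
    coordinate itself and the total input received at each earlier step.
    Head-independence then isolates, for each [u] in [U] and each target
    [j] of [u], the contribution of [u] to the input of [j], so the whole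
    itinerary agrees.  Hence [N(S)] is at most the number of pairs of
    activity patterns. *)
From HB Require Import structures.
From mathcomp Require Import all_boot all_order all_algebra.
From mathcomp Require Import boolp classical_sets cardinality reals.
From mathcomp Require Import lra.
Import Order.TTheory GRing.Theory Num.Theory.
Local Open Scope ring_scope.
Local Open Scope classical_set_scope.

Lemma card_le_keyed (X Y : Type) (A : set X) (key : X -> Y -> Prop) :
  (forall x, A x -> exists k, key x k) ->
  (forall x x' k, A x -> A x' -> key x k -> key x' k -> x = x') ->
  (A #<= [set: Y])%card.
Proof.
move=> keyA key_inj; have [->|/set0P[x0 _]] := eqVneq A set0.
  exact: card_ge0.
pose dec k := if pselect (exists x, A x /\ key x k) is left h
  then projT1 (cid h) else x0.
apply: card_le_trans (card_image_le dec setT); apply: subset_card_le => x Ax.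
have [k kx] := keyA x Ax; exists k => //.
rewrite /dec; case: pselect => [h|[]]; last by exists x.
by case: (cid h) => y [Ay ky] /=; apply: key_inj ky kx.
Qed.

Lemma unit_int_convex (R : realType) (a x y : R) :
  unit_int a -> unit_int x -> unit_int y -> unit_int (a * x + (1 - a) * y).
Proof. by move=> /andP[? ?] /andP[? ?] /andP[? ?]; apply/andP; split; nra. Qed.

Lemma heavE (R : realType) (x : R) : heav x = ((0 < x)%R : bool)%:R.
Proof. by rewrite /heav leNgt; case: (0 < x). Qed.

Lemma bool_natr_inj (R : nzRingType) : injective (fun b : bool => b%:R : R).
Proof. by case; case=> // /eqP; rewrite ?oner_eq0 // eq_sym oner_eq0. Qed.

Notation activity_pattern d := {ffun 'I_d -> {ffun 'I_d -> bool}}.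

Section RegulatoryNetwork.
Variables (R : realType) (d : nat) (a : R).
Variables (K : 'I_d -> 'I_d -> R) (s : 'I_d -> 'I_d -> int).
Variables (T : 'I_d -> 'I_d -> R) (U : {set 'I_d}).
Hypothesis params : regnet_params a K s T.

Local Notation pt := (pt R d).
Local Notation F := (regF a K s T).

Lemma K_ge0 i j : 0 <= K i j.
Proof. by case: params => hK _; case/andP: (hK i j). Qed.

Lemma sum_K j : \sum_(i < d) K i j = 1.
Proof. by case: params => _ []. Qed.

Lemma s_eq0 i j : K i j = 0 -> s i j = 0.
Proof. by case: params => _ [_ [_ [hsK _]]] /hsK. Qed.

Lemma a_unit : unit_int a.
Proof. by case: params => _ [_ [_ [_ [_ [_ ha]]]]]. Qed.

Definition active (y : pt) (i j : 'I_d) : bool := 0 < (s i j)%:~R * (y i - T i j).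

Definition input (y : pt) (j : 'I_d) : R := \sum_(i < d) (active y i j)%:R * K i j.

Lemma regFE y j : F y j = a * y j + (1 - a) * input y j.
Proof.
rewrite /regF /input; congr (_ + _ * _).
by apply: eq_bigr => i _; rewrite heavE mulrC.
Qed.

Lemma active_row (y y' : pt) i : y i = y' i -> active y i = active y' i.
Proof. by move=> e; apply/funext => j; rewrite /active e. Qed.

Lemma input_unit y j : unit_int (input y j).
Proof.
apply/andP; split.
  by apply: sumr_ge0 => i _; rewrite mulr_ge0 ?K_ge0.
rewrite -(sum_K j); apply: ler_sum => i _.
by case: (active y i j); rewrite ?mul1r ?mul0r ?K_ge0.
Qed.

Lemma regF_cube y : cube y -> cube (F y).
Proof.
move=> cy j; rewrite regFE.
by apply: unit_int_convex; [apply: a_unit | apply: cy | apply: input_unit].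
Qed.

Lemma cube_iter k y : cube y -> cube (iter k F y).
Proof. by move=> cy; elim: k => //= k; apply: regF_cube. Qed.

Lemma level_map_active (y y' : pt) i :
  level_map s T i (y i) = level_map s T i (y' i) <-> active y i = active y' i.
Proof.
split=> e; apply/funext => k; have := congr1 (fun f => f k) e;
  rewrite /level_map /active !heavE; [exact: bool_natr_inj | by move=> ->].
Qed.

Definition cell n (x0 : pt) : set pt := [set x | cube x /\
  forall k, (k <= n)%N -> active (iter k F x) = active (iter k F x0)].

Lemma eq_cell n x0 x0' :
  (forall k, (k <= n)%N -> active (iter k F x0) = active (iter k F x0')) ->
  cell n x0 = cell n x0'.
Proof.
move=> e; apply/seteqP; split=> x [cx ex]; split=> // k hk.
  by rewrite ex // e.
by rewrite ex // -e.
Qed.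

Lemma cellS n x0 : cell n.+1 x0 = F @^-1` cell n (F x0) `&` cell 0 x0.
Proof.
apply/seteqP; split=> [x [cx ex] | x [[_ eFx] [cx ex]]].
  split; split=> //; first exact: regF_cube.
    by move=> k hk; rewrite -!iterSr; apply: ex.
  by move=> k; rewrite leqn0 => /eqP ->; apply: (ex 0%N).
by split=> // -[|k] hk; [apply: (ex 0%N) | rewrite !iterSr; apply: eFx].
Qed.

Lemma base_part_neq0 B : base_part s T B -> B !=set0.
Proof.
move=> [I [hI ->]]; have /choice[x hx] : forall i, exists u, I i u.
  by move=> i; case: (hI i) => u ui ->; exists u.
by exists x.
Qed.

Lemma base_part_cell B x0 : base_part s T B -> B x0 -> B = cell 0 x0.
Proof.
move=> [I [hI ->]] Bx0; apply/seteqP; split=> [x Bx | x [cx ex]].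
  split=> [i | k]; first by case: (hI i) (Bx i) => u _ -> [].
  rewrite leqn0 => /eqP -> /=; apply/funext => i.
  case: (hI i) (Bx i) (Bx0 i) => u _ -> [_ e] [_ e0].
  by apply/level_map_active; rewrite e e0.
move=> i; case: (hI i) (Bx0 i) => u _ -> [_ e0]; split; first exact: cx.
by rewrite -e0; apply/level_map_active; rewrite (ex 0%N).
Qed.

Lemma Ppart_cell n B : Ppart a K s T n B ->
  B !=set0 /\ forall x0, B x0 -> B = cell n x0.
Proof.
elim: n B => [|n IH] B.
  by move=> hB; split=> [|x0]; [apply: base_part_neq0 | apply: base_part_cell].
move=> [I [J [hI hJ -> neB]]]; split=> // x0 [Ix0 Jx0].
by rewrite {1}((IH _ hI).2 _ Ix0) {1}(base_part_cell _ _ hJ Jx0) cellS.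
Qed.

Lemma regF_active_a0 y y' : a = 0 -> active y = active y' -> F y = F y'.
Proof. by move=> a0 e; apply/funext => j; rewrite !regFE /input e a0 !mul0r. Qed.

Lemma image_cell_a0 m x0 : a = 0 -> cube x0 ->
  iter m.+1 F @` cell m.+1 x0 = [set iter m.+1 F x0].
Proof.
move=> a0 cx0; apply/seteqP; split=> [_ [x [_ ex] <-] | _ ->].
  exact: (regF_active_a0 _ _ a0 (ex m _)).
by exists x0.
Qed.

Lemma iter_regF_a1 k y : a = 1 -> iter k F y = y.
Proof.
move=> a1; elim: k => //= k ->; apply/funext => j.
by rewrite regFE a1 subrr mul0r mul1r addr0.
Qed.

Section CoordinatewiseInjective.
Hypothesis inj : coordinatewise_injective a K.

Lemma regF_coordE y w : F y w = coord_fun a K w (active y ^~ w) (y w).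
Proof. by rewrite regFE. Qed.

Lemma regF_coord_eq y y' w : cube y -> cube y' -> F y w = F y' w ->
  coord_fun a K w (active y ^~ w) = coord_fun a K w (active y' ^~ w).
Proof.
move=> cy cy' e; apply: contrapT => /inj ne.
have : (coord_fun a K w (active y ^~ w) @` @unit_int R `&`
        coord_fun a K w (active y' ^~ w) @` @unit_int R) (F y w).
  by split; [exists (y w) | exists (y' w)]; rewrite ?e -?regF_coordE.
by rewrite ne.
Qed.

Lemma regF_coord_inj y y' w : a != 0 -> cube y -> cube y' ->
  F y w = F y' w -> y w = y' w.
Proof.
move=> a0 cy cy' e; move: (e).
by rewrite !regF_coordE (regF_coord_eq _ _ _ cy cy' e) => /addIr /(mulfI a0).
Qed.

Lemma regF_coord_input y y' w : a != 1 -> cube y -> cube y' ->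
  F y w = F y' w -> input y w = input y' w.
Proof.
move=> a1 cy cy' /(regF_coord_eq _ _ _ cy cy') /(congr1 (fun f => f 0)).
by rewrite /coord_fun !mulr0 !add0r; apply: mulfI; rewrite subr_eq0 eq_sym.
Qed.

Lemma iter_coord_eq n x x' w : a != 0 -> cube x -> cube x' ->
  iter n F x w = iter n F x' w ->
  forall k, (k <= n)%N -> iter k F x w = iter k F x' w.
Proof.
move=> a0 cx cx'; elim: n => [|n IH] e k.
  by rewrite leqn0 => /eqP ->.
rewrite leq_eqVlt => /orP[/eqP -> // | hk]; apply: IH hk.
by move: e; apply: regF_coord_inj a0 (cube_iter _ _ cx) (cube_iter _ _ cx').
Qed.

Section HeadIndependent.
Hypothesis head_indep : head_independent K U.

(* Head-independence: in the input of a target [j] of [u] in [U], every other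
   nonzero term comes from a row outside [U]. *)
Lemma active_eq_of_free_rows y y' :
  (forall w, w \notin U -> active y w = active y' w /\ input y w = input y' w) ->
  active y = active y'.
Proof.
move=> hW; apply/funext => u; have [uU|/hW[] //] := boolP (u \in U).
apply/funext => j; have [Kuj0|Kuj] := eqVneq (K u j) 0.
  by rewrite /active (s_eq0 _ _ Kuj0) !mul0r.
have arr i : K i j != 0 -> arrow K i j by rewrite /arrow lt_def K_ge0 andbT.
have jU : j \notin U.
  by apply/negP => jU; apply: head_indep.1 u j uU jU (arr _ Kuj).
have := (hW j jU).2; rewrite /input (bigD1 u) //= [in RHS](bigD1 u) //=.
rewrite (eq_bigr (fun i => (active y' i j)%:R * K i j)).
  by move=> /addIr /(mulIf Kuj) /bool_natr_inj.
move=> i ne_iu; have [->|Kij] := eqVneq (K i j) 0; first by rewrite !mulr0.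
have iU : i \notin U.
  apply/negP => iU; apply: (head_indep.2 u i uU iU _ j); first by rewrite eq_sym.
  by split; apply: arr.
by rewrite (hW i iU).1.
Qed.

Lemma itinerary_eq n x0 x0' : a != 0 -> a != 1 -> cube x0 ->
  (forall w, w \notin U ->
     exists2 x', cell n x0' x' & iter n F x0 w = iter n F x' w) ->
  active (iter n F x0) = active (iter n F x0') ->
  forall k, (k <= n)%N -> active (iter k F x0) = active (iter k F x0').
Proof.
move=> a0 a1 cx0 hW en k; rewrite leq_eqVlt => /orP[/eqP -> // | ltkn].
apply: active_eq_of_free_rows => w /hW [x' [cx' ex'] e].
have ek := ex' k (ltnW ltkn); split.
  by rewrite -ek; apply/active_row/(iter_coord_eq _ _ _ _ a0 cx0 cx' e)/ltnW.
rewrite /input -ek.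
apply: (regF_coord_input _ _ _ a1 (cube_iter _ _ cx0) (cube_iter _ _ cx')).
by rewrite -!iterS; apply: (iter_coord_eq _ _ _ _ a0 cx0 cx' e k.+1 ltkn).
Qed.

Lemma image_cell_eq n x0 x0' : cube x0 -> cube x0' ->
  (forall w, w \notin U ->
     proj w (iter n F @` cell n x0) `<=` proj w (iter n F @` cell n x0')) ->
  active (iter n F x0) = active (iter n F x0') ->
  active (iter n.-1 F x0) = active (iter n.-1 F x0') ->
  iter n F @` cell n x0 = iter n F @` cell n x0'.
Proof.
move=> cx0 cx0' hW en en1; have [a0|a0] := eqVneq a 0.
  case: n en en1 hW => [|m] en en1 _.
    by rewrite (@eq_cell 0 x0 x0') // => k; rewrite leqn0 => /eqP ->.
  by rewrite !image_cell_a0 // !iterS (regF_active_a0 _ _ a0 en1).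
rewrite (@eq_cell n x0 x0') //; have [a1|a1] := eqVneq a 1.
  by move=> k _; move: en; rewrite !iter_regF_a1.
apply: itinerary_eq => // w /hW sub.
have /sub [_ [x' cx' <-] e] : proj w (iter n F @` cell n x0) (iter n F x0 w).
  by exists (iter n F x0) => //; exists x0.
by exists x'.
Qed.

Definition active_code (y : pt) : activity_pattern d :=
  [ffun i => [ffun j => active y i j]].

Lemma active_code_eq y y' : active_code y = active_code y' -> active y = active y'.
Proof.
move=> e; apply/funext => i; apply/funext => j.
have := congr1 (fun c : activity_pattern d => c i j) e.
by rewrite /= !ffunE.
Qed.

Definition tail_code n x := (active_code (iter n F x), active_code (iter n.-1 F x)).

Definition cell_key n (J : set pt) c := exists x0,
  [/\ cube x0, J = iter n F @` cell n x0 & tail_code n x0 = c].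

Lemma Cspec_card_le n S :
  (Cspec a K s T (~: U) n S #<= [set: activity_pattern d * activity_pattern d])%card.
Proof.
apply: (card_le_keyed _ _ _ (cell_key n)).
  move=> J [[I hI ->] _]; have [[x0 Ix0] cellI] := Ppart_cell _ _ hI.
  have [cx0 _] : cell n x0 x0 by rewrite -(cellI x0 Ix0).
  by exists (tail_code n x0), x0; rewrite (cellI x0 Ix0).
move=> J J' c [_ pJ] [_ pJ'] [x0 [cx0 eJ <-]] [x0' [cx0' eJ' [en en1]]].
rewrite eJ eJ'; apply: image_cell_eq => //.
- by move=> w hw; rewrite -eJ -eJ' pJ ?pJ' ?inE.
- by rewrite (active_code_eq _ _ en).
- by rewrite (active_code_eq _ _ en1).
Qed.

End HeadIndependent.
End CoordinatewiseInjective.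
End RegulatoryNetwork.

Theorem mainTheorem9 (R : realType) (d : nat) (a : R)
    (K : 'I_d -> 'I_d -> R) (s : 'I_d -> 'I_d -> int) (T : 'I_d -> 'I_d -> R)
    (U : {set 'I_d}) :
  regnet_params a K s T ->
  coordinatewise_injective a K ->
  head_independent K U ->
  essential a K s T (~: U).
Proof.
move=> params inj head_indep.
have [M codesM] :
    exists M, ([set: activity_pattern d * activity_pattern d] #<= `I_M)%card.
  exact/finite_set_leP/finite_finset.
exists M => n S _.
by apply: card_le_trans codesM; apply: Cspec_card_le.
Qed.
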